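(* Let $B\in\mathbb{Z}^{d\times j}$, $j\le d$, have linearly independent columns $B_1,\dots,B_j$. Then for every $\ell\in\{1,\dots,j\}$, $$|\Pi(B)\cap\mathbb{Z}^d|=\mathrm{frac}_B[\ell]\cdot|\Pi(B\setminus B_\ell)\cap\mathbb{Z}^d|.$$
   Context: For $B\in\mathbb{Z}^{d\times j}$ with linearly independent columns, the fundamental parallelepiped is $\Pi(B)=\{Bx: x\in[0,1)^j\}$ (for $j=0$, $\Pi$ of the empty matrix is $\{0\}$). $B\setminus B_\ell$ denotes the $d\times(j-1)$ matrix obtained by deleting column $B_\ell$. For every $b\in\mathbb{Z}^d$ in the real span of the columns of $B$ there is a unique $x\in\mathbb{Q}^j$ with $Bx=b$. The fractionality $\mathrm{frac}_B[i]$ of index $i$ is the maximum, over all such $b\in\mathbb{Z}^d\cap\operatorname{span}(B)$, of the denominator $z_i\ge1$ of $x_i$ written in lowest terms $x_i=y_i/z_i$ with $\gcd(y_i,z_i)=1$. *)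

From mathcomp Require Import all_boot all_order all_algebra.
Set Implicit Arguments. Unset Strict Implicit. Unset Printing Implicit Defensive.
Import Order.TTheory GRing.Theory Num.Theory.
Local Open Scope ring_scope.

Definition ratM (m n : nat) (A : 'M[int]_(m, n)) : 'M[rat]_(m, n) :=
  map_mx (fun z : int => z%:~R) A.

Definition lin_indep_cols (d j : nat) (B : 'M[int]_(d, j)) : Prop :=
  \rank (ratM B) = j.

(* B \ B_l : delete column l; column c of the result is column bump l c < j of B
   (insubd default l is never used). *)
Definition del_col (d j : nat) (B : 'M[int]_(d, j)) (l : 'I_j) : 'M[int]_(d, j.-1) :=
  \matrix_(i < d, c < j.-1) B i (insubd l (bump l c)).

Definition in_par_int (d j : nat) (B : 'M[int]_(d, j)) (b : 'cV[int]_d) : Prop :=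
  exists x : 'cV[rat]_j,
    (forall i : 'I_j, 0 <= x i 0 < 1) /\ ratM b = ratM B *m x.

Definition has_card (T : eqType) (P : T -> Prop) (n : nat) : Prop :=
  exists s : seq T, uniq s /\ (forall t, t \in s <-> P t) /\ size s = n.

Definition is_frac (d j : nat) (B : 'M[int]_(d, j)) (i : 'I_j) (f : nat) : Prop :=
  (exists (b : 'cV[int]_d) (x : 'cV[rat]_j),
      ratM b = ratM B *m x /\ denq (x i 0) = f%:Z) /\
  (forall (b : 'cV[int]_d) (x : 'cV[rat]_j),
      ratM b = ratM B *m x -> denq (x i 0) <= f%:Z).

From mathcomp Require Import all_boot all_order all_algebra all_fingroup all_solvable.
From mathcomp Require Import zify lra.
Set Implicit Arguments. Unset Strict Implicit. Unset Printing Implicit Defensive.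
Import Order.TTheory GRing.Theory Num.Theory FinRing.Theory.
Local Open Scope ring_scope.

(* Let N be a common denominator of a rational left inverse of B: every x with
   B x integral lies in (1/N) Z^j.  Reducing modulo Z^j, the integer points of
   Pi(B) correspond to a subgroup G of (Z/N)^j, and those of Pi(B \ B_l) to the
   kernel of the projection of G onto its l-th coordinate.  The image of that
   projection is a subgroup of the cyclic group Z/N, hence cyclic, and the
   denominator of a rational number is the additive order of its residue in
   Z/N, so the order of the image is frac_B[l].  Lagrange's theorem for the
   projection gives the formula. *)

Lemma Qint_mulr_denq (c : int) (x : rat) :
  (c%:~R * x \is a Num.int) = (denq x %| c)%Z.
Proof.
apply/idP/idP => [/intrP[m] | /dvdzP[q ->]]; last first.
  by rewrite rmorphM /= -mulrA [_ * x]mulrC -numqE rpredM ?intr_int.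
case: ratP => n e cop_ne cx.
have /(congr1 absz) : c * n = m * e.+1%:Z.
  apply: (@intr_inj rat); rewrite !rmorphM /= -cx mulrA divfK //.
  by rewrite intr_eq0.
rewrite !abszM /= => cn.
have cop_en : coprime e.+1 `|n| by rewrite coprime_sym.
rewrite /dvdz unfold_in /= -(Gauss_dvdr _ cop_en) mulnC cn.
exact: dvdn_mull.
Qed.

Lemma Qint_natr_div (m n : nat) : (0 < n)%N ->
  ((m%:R / n%:R : rat) \is a Num.int) = (n %| m)%N.
Proof.
move=> n_gt0; apply/idP/idP => [/intrP[z mn] | /dvdnP[q ->]]; last first.
  by rewrite natrM mulfK ?pnatr_eq0 -?lt0n // rpred_nat.
have /(congr1 absz) : m%:Z = z * n%:Z.
  by apply: (@intr_inj rat); rewrite rmorphM /= -mn divfK ?pnatr_eq0 -?lt0n.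
by rewrite abszM /= => ->; apply: dvdn_mull.
Qed.

Lemma order_Zp_dvdn N (t : 'I_N.+1) c : (#[t]%g %| c)%N = (N.+1 %| t * c)%N.
Proof. by rewrite order_dvdn Zp_expg -val_eqE /= /dvdn. Qed.

Lemma denq_Zp N (t : 'I_N.+1) (y : rat) :
  y - t%:R / N.+1%:R \is a Num.int -> denq y = #[t]%g.
Proof.
move=> yt.
have dvdE c : (`|denq y| %| c)%N = (#[t]%g %| c)%N.
  rewrite order_Zp_dvdn -(@Qint_natr_div (t * c)) //.
  rewrite -[(_ %| c)%N]/(denq y %| c%:Z)%Z -Qint_mulr_denq.
  have -> : c%:Z%:~R * y = c%:R * (y - t%:R / N.+1%:R) + (t * c)%N%:R / N.+1%:R.
    by rewrite natrM mulrBr mulrA [c%:R * t%:R]mulrC subrK.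
  by rewrite rpredDl // rpredM ?rpred_nat.
rewrite -absz_denq; congr Posz.
by apply/eqP; rewrite eqn_dvd dvdE dvdnn -dvdE dvdnn.
Qed.

Definition in_lattice d n (M : 'M[int]_(d, n)) (x : 'cV[rat]_n) : bool :=
  ratM M *m x \is a mxOver Num.int.

Lemma ratM_int m n (A : 'M[int]_(m, n)) : ratM A \is a mxOver Num.int.
Proof. by apply/mxOverP => i k; rewrite mxE intr_int. Qed.

Lemma ratM_inj m n : injective (@ratM m n).
Proof.
move=> A B /matrixP AB; apply/matrixP => i k.
by have := AB i k; rewrite !mxE => /intr_inj.
Qed.

Definition numq_mx m n (A : 'M[rat]_(m, n)) : 'M[int]_(m, n) := map_mx numq A.

Lemma numq_mxK m n (A : 'M[rat]_(m, n)) :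
  A \is a mxOver Num.int -> ratM (numq_mx A) = A.
Proof. by move=> /mxOverP AZ; apply/matrixP => i k; rewrite !mxE numqK. Qed.

Lemma in_lattice_ratM d n (M : 'M[int]_(d, n)) b x :
  ratM b = ratM M *m x -> in_lattice M x.
Proof. by rewrite /in_lattice => <-; apply: ratM_int. Qed.

Lemma in_lattice_int d n (M : 'M[int]_(d, n)) x :
  x \is a mxOver Num.int -> in_lattice M x.
Proof. by move=> xZ; apply: mxOverM => //; apply: ratM_int. Qed.

Lemma mxOver_intD m n (A B : 'M[rat]_(m, n)) :
  A \is a mxOver Num.int -> B \is a mxOver Num.int -> A + B \is a mxOver Num.int.
Proof. by move=> /mxOverP AZ /mxOverP BZ; apply/mxOverP => i k; rewrite mxE rpredD. Qed.

Lemma mxOver_intN m n (A : 'M[rat]_(m, n)) :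
  A \is a mxOver Num.int -> - A \is a mxOver Num.int.
Proof. by move=> /mxOverP AZ; apply/mxOverP => i k; rewrite mxE rpredN. Qed.

Lemma in_latticeD d n (M : 'M[int]_(d, n)) x y :
  in_lattice M x -> in_lattice M y -> in_lattice M (x + y).
Proof. by rewrite /in_lattice mulmxDr; apply: mxOver_intD. Qed.

Definition in_unit_box n (x : 'cV[rat]_n) := forall i, 0 <= x i 0 < 1.

Lemma in_unit_box_int_eq n (x y : 'cV[rat]_n) :
  in_unit_box x -> in_unit_box y -> x - y \is a mxOver Num.int -> x = y.
Proof.
move=> x01 y01 /mxOverP xyZ; apply/matrixP => i k; rewrite ord1.
have /andP[x0 x1] := x01 i; have /andP[y0 y1] := y01 i.
have /intrP[m xy] : x i 0 - y i 0 \is a Num.int by have := xyZ i 0; rewrite !mxE.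
have m_lt1 : m%:~R < 1 :> rat by rewrite -xy; lra.
have m_gtN1 : (-1)%:~R < m%:~R :> rat by rewrite -xy; lra.
rewrite ltrz1 in m_lt1; rewrite ltr_int in m_gtN1.
by apply/eqP; rewrite -subr_eq0 xy (_ : m = 0) //; lia.
Qed.

Section Grid.
Variables (D n : nat).
Implicit Types k : 'cV['I_D.+1]_n.

Definition grid k : 'cV[rat]_n := map_mx (fun t : 'I_D.+1 => (t : nat)%:R / D.+1%:R) k.

Lemma grid_entry k i : D.+1%:R * grid k i 0 = (k i 0 : nat)%:R.
Proof. by rewrite mxE mulrC divfK ?pnatr_eq0. Qed.

Lemma grid_in_unit_box k : in_unit_box (grid k).
Proof.
move=> i; rewrite mxE divr_ge0 ?ler0n //= ltr_pdivrMr ?ltr0n // mul1r ltr_nat.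
exact: ltn_ord.
Qed.

Lemma grid_inj : injective grid.
Proof.
move=> k k' /matrixP kk'; apply/matrixP => i z; rewrite ord1; apply/val_inj/eqP.
by rewrite -(eqr_nat rat) -!grid_entry kk'.
Qed.

Lemma grid0 : grid 0 = 0.
Proof. by apply/matrixP => i z; rewrite !mxE mul0r. Qed.

Lemma gridD k k' : grid (k + k') - (grid k + grid k') \is a mxOver Num.int.
Proof.
apply/mxOverP => i z; rewrite ord1 !mxE /=.
set a := (k i 0 : nat); set b := (k' i 0 : nat).
rewrite -mulrDl -mulrBl -natrD {2}(divn_eq (a + b) D.+1) natrD opprD addrCA subrr addr0.
by rewrite mulNr natrM mulfK ?pnatr_eq0 // rpredN rpred_nat.
Qed.

Lemma grid_repr x :
  D.+1%:R *: x \is a mxOver Num.int -> exists k, x - grid k \is a mxOver Num.int.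
Proof.
move=> /mxOverP NxZ.
have mod_lt (z : int) : (`|(z %% D.+1%:Z)%Z|%N < D.+1)%N.
  have := ltz_pmod z (isT : 0 < D.+1%:Z); have := modz_ge0 z (isT : D.+1%:Z != 0); lia.
exists (\col_i Ordinal (mod_lt (numq (D.+1%:R * x i 0)))).
apply/mxOverP => i z; rewrite ord1 !mxE /=.
set q := numq _; have qE : q%:~R = D.+1%:R * x i 0.
  by rewrite numqK //; have := NxZ i 0; rewrite mxE.
rewrite natr_absz ger0_norm ?modz_ge0 //.
have -> : (q %% D.+1)%Z = q - (q %/ D.+1)%Z * D.+1.
  by rewrite {2}(divz_eq q D.+1) [_ + (_ %% _)%Z]addrC addrK.
rewrite rmorphB rmorphM /= qE.
rewrite -[D.+1%:~R]/(D.+1%:R : rat) mulrBl [D.+1%:R * _]mulrC !mulfK ?pnatr_eq0 //.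
by rewrite opprB addrC subrK intr_int.
Qed.
End Grid.

Section InsertZero.
Variables (n : nat) (l : 'I_n.+1).

Definition insert0 (V : nmodType) (v : 'cV[V]_n) : 'cV[V]_n.+1 :=
  \col_i oapp (fun c => v c 0) 0 (unlift l i).

Lemma insert0_lift (V : nmodType) (v : 'cV[V]_n) c : insert0 v (lift l c) 0 = v c 0.
Proof. by rewrite mxE liftK. Qed.

Lemma insert0_at (V : nmodType) (v : 'cV[V]_n) : insert0 v l 0 = 0.
Proof. by rewrite mxE unlift_none. Qed.

Lemma row'_insert0 (V : nmodType) : cancel (@insert0 V) (row' l).
Proof. by move=> v; apply/matrixP => c z; rewrite ord1 mxE insert0_lift. Qed.

Lemma insert0_row' (V : nmodType) (w : 'cV[V]_n.+1) :
  w l 0 = 0 -> insert0 (row' l w) = w.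
Proof.
move=> wl0; apply/matrixP => i z; rewrite ord1 mxE.
by case: unliftP => [c -> | ->] /=; rewrite ?mxE.
Qed.

Lemma map_insert0 (V W : nmodType) (f : V -> W) (v : 'cV[V]_n) :
  f 0 = 0 -> map_mx f (insert0 v) = insert0 (map_mx f v).
Proof.
move=> f0; apply/matrixP => i z; rewrite !mxE.
by case: unliftP => [c _ | _] /=; rewrite ?mxE.
Qed.

Lemma mulmx_insert0 (R : pzSemiRingType) d (A : 'M[R]_(d, n.+1)) (v : 'cV[R]_n) :
  A *m insert0 v = col' l A *m v.
Proof.
apply/matrixP => a z; rewrite (ord1 z) !mxE (bigD1_ord l) //= insert0_at mulr0 add0r.
by apply: eq_bigr => c _; rewrite insert0_lift mxE.
Qed.

Lemma mul_row'_col' (R : pzSemiRingType) d (Q : 'M[R]_(n.+1, d)) (A : 'M[R]_(d, n.+1)) :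
  Q *m A = 1%:M -> row' l Q *m col' l A = 1%:M.
Proof.
move=> QA; rewrite -mxsub_mul QA; apply/matrixP => a b.
by rewrite !mxE (inj_eq lift_inj).
Qed.

End InsertZero.

Lemma card_ker_morphim (aT rT : finGroupType) (D G : {group aT})
    (f : {morphism D >-> rT}) :
  G \subset D -> #|G| = (#|G :&: ('ker f)%g| * #|(f @* G)%g|)%N.
Proof. by move=> sGD; rewrite card_morphim (setIidPr sGD) LagrangeI. Qed.

Section MatrixEntry.
Variables (V : finZmodType) (m n : nat) (i : 'I_m) (j : 'I_n).

Definition mx_entry (A : 'M[V]_(m, n)) : V := A i j.

Lemma mx_entryM : {in setT &, {morph mx_entry : A B / (A * B)%g}}.
Proof. by move=> A B _ _; rewrite /mx_entry !zmodMgE mxE. Qed.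

Canonical mx_entry_morphism := Morphism mx_entryM.

Lemma ker_mx_entry : ('ker mx_entry_morphism)%g = [set A : 'M[V]_(m, n) | A i j == 0].
Proof. by apply/setP => A; rewrite !inE /mx_entry zmod1gE. Qed.

End MatrixEntry.

Arguments mx_entry_morphism {V m n} i j.

Lemma cyclic_Zp_group N (H : {group 'I_N.+1}) : cyclic H.
Proof. by apply: cyclicS (subsetT H) _; apply/cyclicP; exists Zp1; apply: Zp_cycle. Qed.

Section LatticeGrid.
Variables (d n : nat) (M : 'M[int]_(d, n)) (D : nat).

Definition lattice_grid := [set k : 'cV['I_D.+1]_n | in_lattice M (grid k)].

Lemma group_set_lattice_grid : group_set lattice_grid.
Proof.
apply/group_setP; split => [|k k']; rewrite !inE.
  by rewrite zmod1gE grid0 /in_lattice mulmx0 mxOver0 ?rpred0.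
move=> Mk Mk'; rewrite zmodMgE -[grid _](subrK (grid k + grid k')).
by apply: in_latticeD; [apply: in_lattice_int; apply: gridD | apply: in_latticeD].
Qed.

Canonical lattice_grid_group := group group_set_lattice_grid.

Variable Q : 'M[rat]_(n, d).
Hypotheses (QM : Q *m ratM M = 1%:M) (QZ : D.+1%:R *: Q \is a mxOver Num.int).

Lemma lattice_den x : in_lattice M x -> D.+1%:R *: x \is a mxOver Num.int.
Proof. by move=> Mx; rewrite -[x]mul1mx -QM -mulmxA scalemxAl; apply: mxOverM. Qed.

Lemma lattice_mul_inj : injective (fun x : 'cV[rat]_n => ratM M *m x).
Proof. by move=> x y /= Mxy; rewrite -[x]mul1mx -[y]mul1mx -QM -!mulmxA Mxy. Qed.

Lemma lattice_grid_repr x : in_lattice M x ->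
  exists2 k, k \in lattice_grid & x - grid k \is a mxOver Num.int.
Proof.
move=> Mx; have [k xkZ] := grid_repr (lattice_den Mx).
exists k => //; rewrite inE (_ : grid k = x + - (x - grid k)); last first.
  by rewrite opprB addrC subrK.
by apply: in_latticeD Mx _; apply/in_lattice_int/mxOver_intN.
Qed.

Lemma has_card_lattice_grid : has_card (in_par_int M) #|lattice_grid|.
Proof.
exists [seq numq_mx (ratM M *m grid k) | k <- enum lattice_grid]; split; [|split].
- rewrite map_inj_in_uniq ?enum_uniq // => k k'; rewrite !mem_enum !inE => Mk Mk'.
  by move/(congr1 (@ratM _ _)); rewrite !numq_mxK // => /lattice_mul_inj/grid_inj.
- move=> b; split => [/mapP[k] | [x [x01 bx]]].
    rewrite mem_enum inE => Mk ->.
    by exists (grid k); rewrite numq_mxK //; split=> //; apply: grid_in_unit_box.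
  have [k Mk xkZ] := lattice_grid_repr (in_lattice_ratM bx).
  have xk : x = grid k by apply: in_unit_box_int_eq => //; apply: grid_in_unit_box.
  apply/mapP; exists k; rewrite ?mem_enum //; apply: ratM_inj.
  by rewrite numq_mxK -?xk -?bx ?ratM_int.
- by rewrite size_map -cardE.
Qed.

Lemma is_frac_lattice_grid l :
  is_frac M l #|(mx_entry_morphism l 0 @* lattice_grid)%g|.
Proof.
set f := mx_entry_morphism l 0; split.
  have /cyclicP[t imf] := cyclic_Zp_group (f @* lattice_grid_group)%G.
  have /morphimP[k _ Mk tE] : t \in (f @* lattice_grid)%g by rewrite imf cycle_id.
  exists (numq_mx (ratM M *m grid k)), (grid k); split.
    by rewrite inE in Mk; rewrite numq_mxK.
  by rewrite (@denq_Zp D (k l 0)) ?imf -?orderE ?tE // mxE subrr rpred0.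
move=> b x bx.
have [k Mk xkZ] := lattice_grid_repr (in_lattice_ratM bx).
rewrite (@denq_Zp D (k l 0)); last by have := mxOverP xkZ l 0; rewrite !mxE.
rewrite lez_nat dvdn_leq ?cardG_gt0 //.
exact: order_dvdG (mem_morphim f (in_setT k) Mk).
Qed.

End LatticeGrid.

Lemma grid_insert0 D n (l : 'I_n.+1) (k : 'cV['I_D.+1]_n) :
  grid (insert0 l k) = insert0 l (grid k).
Proof. by rewrite /grid map_insert0 // mul0r. Qed.

Lemma in_lattice_col' d n (M : 'M[int]_(d, n.+1)) (l : 'I_n.+1) x :
  in_lattice (col' l M) x = in_lattice M (insert0 l x).
Proof. by rewrite /in_lattice mulmx_insert0 /ratM map_col'. Qed.

Lemma card_lattice_grid_col' d n D (M : 'M[int]_(d, n.+1)) (l : 'I_n.+1) :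
  #|lattice_grid M D :&: ('ker (mx_entry_morphism l 0))%g| =
  #|lattice_grid (col' l M) D|.
Proof.
rewrite ker_mx_entry -(card_imset _ (can_inj (@row'_insert0 n l _))).
apply: eq_card => k; rewrite !inE; apply/andP/imsetP => [[Mk /eqP k0] | [k' Mk' ->]].
  exists (row' l k); last by rewrite insert0_row'.
  by rewrite inE in_lattice_col' -grid_insert0 insert0_row'.
by rewrite insert0_at eqxx grid_insert0 -in_lattice_col'; rewrite inE in Mk'.
Qed.

Lemma mx_common_denom m n (A : 'M[rat]_(m, n)) :
  exists D, D.+1%:R *: A \is a mxOver Num.int.
Proof.
set N := (\prod_(p : 'I_m * 'I_n) `|denq (A p.1 p.2)|)%N.
have N_gt0 : (0 < N)%N by rewrite prodn_gt0 // => p; rewrite absz_gt0 denq_neq0.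
exists N.-1; rewrite prednK //; apply/mxOverP => i j; rewrite mxE.
rewrite (Qint_mulr_denq N%:Z) /dvdz unfold_in /=.
by rewrite /N (bigD1 (i, j)) //= dvdn_mulr.
Qed.

Lemma del_col_col' d j (B : 'M[int]_(d, j.+1)) (l : 'I_j.+1) : del_col B l = col' l B.
Proof.
apply/matrixP => i c; rewrite !mxE; congr (B i _); apply: val_inj.
by rewrite insubdK //; exact: (ltn_ord (lift l c)).
Qed.

Theorem mainTheorem3 (d j : nat) (B : 'M[int]_(d, j)) (l : 'I_j) :
  (j <= d)%N -> lin_indep_cols B ->
  exists (N1 N2 f : nat),
    has_card (in_par_int B) N1 /\
    has_card (in_par_int (del_col B l)) N2 /\
    is_frac B l f /\
    N1 = (f * N2)%N.
Proof.
move=> _; case: j B l => [|j] B l indep; first by case: l.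
have /row_fullP[Q QB] : row_full (ratM B) by rewrite /row_full indep.
have [D QZ] := mx_common_denom Q.
have QZ' : D.+1%:R *: row' l Q \is a mxOver Num.int.
  by apply/mxOverP => i k; rewrite !mxE; have := mxOverP QZ (lift l i) k; rewrite mxE.
have QB' : row' l Q *m ratM (col' l B) = 1%:M by rewrite /ratM map_col' mul_row'_col'.
exists #|lattice_grid B D|, #|lattice_grid (col' l B) D|,
       #|(mx_entry_morphism l 0 @* lattice_grid B D)%g|.
rewrite del_col_col'; split; first exact: has_card_lattice_grid QB QZ.
split; first exact: has_card_lattice_grid QB' QZ'.
split; first exact: (is_frac_lattice_grid QB QZ l).
rewrite (card_ker_morphim (mx_entry_morphism l 0) (subsetT (lattice_grid_group B D))).
by rewrite card_lattice_grid_col' mulnC.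
Qed.
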